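(* Let $\Gamma=(N,A,u)$ be a finite game with a unique correlated equilibrium $q^*$. Then $\mathcal{I}=\mathcal{I}_{q^*}=\{\mu\in\Delta A:\mathrm{supp}(\mu)\subseteq\mathrm{supp}(q^* ),\ \mathbb{E}_\mu[\log q^*]=\mathbb{E}_{q^*}[\log q^*]\}$; equivalently (given that $\mathcal{I}$ is the set of directly implementable outcomes), $\mu$ is directly implementable if and only if $\mathrm{supp}(\mu)\subseteq\mathrm{supp}(q^* )$ and $\mathbb{E}_\mu[\log q^*]=\mathbb{E}_{q^*}[\log q^*]$.
   Context: A finite game has finite player set $N$, finite action sets $A_i$, $A=\times_iA_i$, utilities $u_i:A\to\mathbb{R}$. $\mathrm{CE}(\Gamma)$ is the set of correlated equilibria: $p\in\Delta A$ such that for all $i$, all $a_i$ with $\sum_{a_{-i}}p_{a_i,a_{-i}}>0$, all $b\in A_i$, $\sum_{a_{-i}}p_{a_i,a_{-i}}[u_i(a_i,a_{-i})-u_i(b,a_{-i})]\ge0$. For $q\in\Delta A$, $\mathcal{I}_q=\{\mu\in\Delta A:\mathrm{supp}(\mu)\subseteq\mathrm{supp}(q),\ \mathbb{E}_\mu[\log q]=\mathbb{E}_q[\log q]\}$ and $\mathcal{I}=\bigcup_{q\in\mathrm{CE}(\Gamma)}\mathcal{I}_q$ (convention $0\log 0=0$). Direct implementability: with a partially specified data-generating process $(M,\eta,\mathcal{F})$, $M=A$, $\eta\in\Delta A$, $\mathcal{F}\subseteq\{f:A\to\mathbb{R}\}$, the belief $q$ is the unique maximizer of $-\sum_aq_a\log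 q_a$ over $\{q\in\Delta A:\sum_aq_af(a)=\sum_a\eta_af(a)\ \forall f\in\mathcal{F}\}$; $\mu$ is directly implementable if for some such process with $\eta=\mu$ the obedience conditions $\sum_{a_{-i}}q_{a_i,a_{-i}}[u_i(a_i,a_{-i})-u_i(b,a_{-i})]\ge0$ hold for all $i$, all $a_i$ with positive $q$-marginal, all $b\in A_i$. *)

From HB Require Import structures.
From mathcomp Require Import all_boot all_order all_algebra.
From mathcomp Require Import all_classical all_reals exp.
Set Implicit Arguments. Unset Strict Implicit. Unset Printing Implicit Defensive.
Import Order.TTheory GRing.Theory Num.Theory.
Local Open Scope ring_scope.

Section Game.
Variables (R : realType) (N : finType) (Act : N -> finType).

Definition profile := {dffun forall i : N, Act i}.

Definition dev (a : profile) (i : N) (b : Act i) : profile :=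
  [ffun j => @dfwith N (fun k => Act k) (fun k => a k) i b j].

Definition is_dist (p : {ffun profile -> R}) : Prop :=
  (forall a, 0 <= p a) /\ \sum_a p a = 1.

Definition obedient (u : N -> profile -> R) (p : {ffun profile -> R}) : Prop :=
  forall (i : N) (ai : Act i),
    0 < \sum_(a : profile | a i == ai) p a ->
    forall b : Act i,
      0 <= \sum_(a : profile | a i == ai) p a * (u i a - u i (dev a b)).

Definition CE (u : N -> profile -> R) (p : {ffun profile -> R}) : Prop :=
  is_dist p /\ obedient u p.

(* x log y with the convention 0 log 0 = 0 (log 0 is taken to be 0) *)
Definition logc (y : R) : R := if y == 0 then 0 else ln y.

Definition Elog (mu q : {ffun profile -> R}) : R := \sum_a mu a * logc (q a).

Definition supp_sub (mu q : {ffun profile -> R}) : Prop :=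
  forall a, mu a != 0 -> q a != 0.

Definition Iq (q mu : {ffun profile -> R}) : Prop :=
  is_dist mu /\ supp_sub mu q /\ Elog mu q = Elog q q.

Definition Iset (u : N -> profile -> R) (mu : {ffun profile -> R}) : Prop :=
  exists q, CE u q /\ Iq q mu.

Definition entropy (q : {ffun profile -> R}) : R := - Elog q q.

Definition feasible (eta : {ffun profile -> R}) (F : (profile -> R) -> Prop)
    (q : {ffun profile -> R}) : Prop :=
  is_dist q /\ forall f, F f -> \sum_a q a * f a = \sum_a eta a * f a.

Definition maxent_belief (eta : {ffun profile -> R}) (F : (profile -> R) -> Prop)
    (q : {ffun profile -> R}) : Prop :=
  feasible eta F q /\
  forall q', feasible eta F q' -> q' != q -> entropy q' < entropy q.

(* direct implementability of mu (process (M, eta, F) with M = A, eta = mu) *)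
Definition directly_implementable (u : N -> profile -> R)
    (mu : {ffun profile -> R}) : Prop :=
  is_dist mu /\
  exists (F : (profile -> R) -> Prop) (q : {ffun profile -> R}),
    maxent_belief mu F q /\ obedient u q.

End Game.

From HB Require Import structures.
From mathcomp Require Import all_boot all_order all_algebra.
From mathcomp Require Import all_classical all_reals exp.
From mathcomp Require Import sequences ring lra.

(* Uniqueness of the correlated equilibrium q* gives I = I_{q*} at once, and forces
   the obedient maximum-entropy belief of any directly implementable mu to be q*.
   The feasible set of that entropy problem is convex and contains mu, so no point
   q + t (mu - q) of the line through q and mu that is still a distribution can beat
   the entropy of q.  Along this line
     H(q + t (mu - q)) >= H(q) + t (E_q[log q] - E_mu[log q]) - t^2 chi2(mu, q),
   plus -t log t times the mass of mu outside supp q.  That term forces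
   supp mu <= supp q; then t may take either sign and the linear term must vanish.
   Conversely, the moment conditions for log q* and for the indicator of {q* = 0}
   confine feasible beliefs to supp q* with cross-entropy relative to q* equal to
   the entropy of q*, so Gibbs' inequality makes q* the unique entropy maximizer. *)

Set Implicit Arguments. Unset Strict Implicit. Unset Printing Implicit Defensive.
Import Order.TTheory GRing.Theory Num.Theory.
Local Open Scope ring_scope.

Section RealFacts.
Variable R : realType.
Implicit Types t x y z : R.

Lemma ln_le_subr1 z : 0 < z -> ln z <= z - 1.
Proof. by move=> z0; have := expR_ge1Dx (ln z); rewrite lnK ?posrE //; lra. Qed.

Lemma ln_lt_subr1 z : 0 < z -> z != 1 -> ln z < z - 1.
Proof.
move=> z0 z1; have /expR_gt1Dx : ln z != 0 by rewrite ln_eq0.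
by rewrite lnK ?posrE //; lra.
Qed.

Lemma exists_ln_lt x : exists2 t, 0 < t <= 1 & ln t < x.
Proof.
exists (expR (- (`|x| + 1))).
  by rewrite expR_gt0 expR_le1; have := normr_ge0 x; lra.
by rewrite expRK; have := ler_norm (- x); rewrite normrN; lra.
Qed.

Lemma logc0 : logc (0 : R) = 0.
Proof. by rewrite /logc eqxx. Qed.

Lemma logcE z : z != 0 -> logc z = ln z.
Proof. by rewrite /logc => /negPf ->. Qed.

Definition nxlogx z := - (z * logc z).

Lemma nxlogx0 : nxlogx 0 = 0.
Proof. by rewrite /nxlogx mul0r oppr0. Qed.

(* Equivalent to [z ln (z / y) <= z (z / y - 1)], an instance of [ln x <= x - 1]. *)
Lemma nxlogx_ge_quadratic y z : 0 < y -> 0 <= z ->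
  nxlogx y - (ln y + 1) * (z - y) - (z - y) ^+ 2 / y <= nxlogx z.
Proof.
move=> y0; rewrite le0r => /orP [/eqP -> | z0].
  rewrite nxlogx0 /nxlogx logcE ?gt_eqF //.
  suff -> : - (y * ln y) - (ln y + 1) * (0 - y) - (0 - y) ^+ 2 / y = 0 by [].
  by field; rewrite gt_eqF.
rewrite /nxlogx !logcE ?gt_eqF //.
have : ln (z / y) <= z / y - 1 by apply: ln_le_subr1; rewrite divr_gt0.
rewrite ln_div ?posrE // => lnzy.
have : z * (ln z - ln y) <= z * (z / y - 1) by apply: ler_wpM2l; [exact: ltW | lra].
have -> : (z - y) ^+ 2 / y = z * (z / y - 1) - (z - y) by field; rewrite gt_eqF.
lra.
Qed.

Lemma nxlogx_mul_ge t x : 0 < t -> 0 <= x -> x <= 1 -> - (t * x * ln t) <= nxlogx (t * x).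
Proof.
move=> t0 x0 x1; have [-> | xn0] := eqVneq x 0.
  by rewrite mulr0 mul0r oppr0 nxlogx0.
have xp : 0 < x by rewrite lt0r xn0.
rewrite /nxlogx logcE ?mulf_neq0 ?gt_eqF // lnM ?posrE //.
have := ln_le0 x1; have : 0 < t * x by exact: mulr_gt0.
nra.
Qed.

Lemma mul_logc_ratio_lt x y : 0 <= x -> 0 <= y -> (x != 0 -> y != 0) -> x != y ->
  x * (logc y - logc x) < y - x.
Proof.
move=> x0 y0 xy; have [-> ne0y | xn0 nexy] := eqVneq x 0.
  by rewrite mul0r subr0 lt0r y0 andbT eq_sym.
have xp : 0 < x by rewrite lt0r xn0.
have yp : 0 < y by rewrite lt0r xy.
rewrite (logcE xn0) (logcE (lt0r_neq0 yp)) -ln_div ?posrE //.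
have -> : y - x = x * (y / x - 1) by field.
rewrite ltr_pM2l // ln_lt_subr1 ?divr_gt0 //.
by apply: contra nexy => /eqP yx; rewrite -[y](divfK xn0) yx mul1r.
Qed.

Lemma mul_logc_ratio_le x y : 0 <= x -> 0 <= y -> (x != 0 -> y != 0) ->
  x * (logc y - logc x) <= y - x.
Proof.
move=> x0 y0 xy; have [-> | nexy] := eqVneq x y; first by rewrite !subrr mulr0.
exact/ltW/mul_logc_ratio_lt.
Qed.

Lemma lin_quad_le0_eq0 (K C e : R) : 0 < e -> 0 <= C ->
  (forall t, `|t| <= e -> t * K <= t ^+ 2 * C) -> K = 0.
Proof.
move=> e0 C0 bound; apply/eqP/negPn/negP => K0.
have K1 : 0 < `|K| + 1 by have := normr_ge0 K; lra.
pose s := Num.min (e / (`|K| + 1)) (1 / (C + 1)).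
have s0 : 0 < s by rewrite lt_min !divr_gt0 //; lra.
have sC : s * (C + 1) <= 1 by rewrite -ler_pdivlMr ?ge_min ?lexx ?orbT //; lra.
have sK : s * (`|K| + 1) <= e by rewrite -ler_pdivlMr ?ge_min ?lexx.
have /bound : `|s * K| <= e by rewrite normrM gtr0_norm //; nra.
have : 0 < s * K ^+ 2 by rewrite mulr_gt0 // lt0r sqrf_eq0 K0 sqr_ge0.
nra.
Qed.

End RealFacts.

Section MaxEntropy.
Variables (R : realType) (N : finType) (Act : N -> finType).
Local Notation dist := {ffun profile Act -> R}.
Implicit Types (p q mu : dist) (t : R).

Lemma entropyE q : entropy q = \sum_a nxlogx (q a).
Proof. by rewrite /entropy /Elog -sumrN. Qed.

Lemma dist_le1 mu a : is_dist mu -> mu a <= 1.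
Proof. by move=> [mu0 <-]; rewrite (bigD1 a) //= lerDl sumr_ge0. Qed.

Definition line q mu t : dist := [ffun a => q a + t * (mu a - q a)].

Lemma lineE q mu t a : line q mu t a = q a + t * (mu a - q a).
Proof. by rewrite ffunE. Qed.

Lemma sum_line q mu t (f : profile Act -> R) :
  \sum_a line q mu t a * f a =
  \sum_a q a * f a + t * (\sum_a mu a * f a - \sum_a q a * f a).
Proof.
by rewrite -sumrB mulr_sumr -big_split; apply: eq_bigr => a _ /=; rewrite lineE; ring.
Qed.

Lemma line_ge0 q mu t : is_dist q -> is_dist mu -> 0 <= t -> t <= 1 ->
  forall a, 0 <= line q mu t a.
Proof.
move=> [q0 _] [mu0 _] t0 t1 a; rewrite lineE.
have -> : q a + t * (mu a - q a) = (1 - t) * q a + t * mu a by ring.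
by rewrite addr_ge0 // mulr_ge0 // subr_ge0.
Qed.

Lemma feasible_line mu q F t : is_dist mu -> feasible mu F q ->
  (forall a, 0 <= line q mu t a) -> feasible mu F (line q mu t).
Proof.
move=> [_ mu1] [[_ q1] qF] r0; split; last first.
  by move=> f Ff; rewrite sum_line qF // subrr mulr0 addr0.
split=> //; have := sum_line q mu t (fun=> 1).
by rewrite !(eq_bigr _ (fun a _ => mulr1 _)) mu1 q1 subrr mulr0 addr0.
Qed.

Lemma maxent_line_le mu q F t : is_dist mu -> maxent_belief mu F q ->
  (forall a, 0 <= line q mu t a) -> entropy (line q mu t) <= entropy q.
Proof.
move=> mu_dist [qF qmax] r0; have [-> | neq] := eqVneq (line q mu t) q; first by [].
by apply/ltW/qmax/neq; apply: feasible_line.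
Qed.

Definition chi2 mu q := \sum_(a | q a != 0) (mu a - q a) ^+ 2 / q a.

Lemma chi2_ge0 mu q : is_dist q -> 0 <= chi2 mu q.
Proof. by move=> [q0 _]; apply: sumr_ge0 => a _; rewrite divr_ge0 ?sqr_ge0. Qed.

Lemma nxlogx_line_ge q mu t a : 0 <= q a -> 0 <= line q mu t a ->
  nxlogx (q a) + t * (q a * logc (q a) - mu a * logc (q a)) - t * (mu a - q a)
  + (if q a == 0 then t * mu a + nxlogx (t * mu a)
     else - (t ^+ 2 * ((mu a - q a) ^+ 2 / q a)))
  <= nxlogx (line q mu t a).
Proof.
rewrite lineE => q0 r0; have [qa0 | qan0] := eqVneq (q a) 0.
  by rewrite qa0 nxlogx0 logc0 !mulr0 !subr0 !add0r; lra.
have qa : 0 < q a by rewrite lt0r qan0.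
have := nxlogx_ge_quadratic qa r0.
have -> : q a + t * (mu a - q a) - q a = t * (mu a - q a) by ring.
rewrite exprMn /nxlogx (logcE qan0); lra.
Qed.

Lemma entropy_line_ge q mu t : is_dist q -> is_dist mu ->
  (forall a, 0 <= line q mu t a) ->
  entropy q + t * (Elog q q - Elog mu q) - t ^+ 2 * chi2 mu q
  + \sum_(a | q a == 0) (t * mu a + nxlogx (t * mu a)) <= entropy (line q mu t).
Proof.
move=> [q0 q1] [_ mu1] r0; rewrite [entropy (line _ _ _)]entropyE.
apply: le_trans (ler_sum _ (fun a _ => nxlogx_line_ge (q0 a) (r0 a))).
rewrite !big_split /= -entropyE.
have -> : \sum_a t * (q a * logc (q a) - mu a * logc (q a)) = t * (Elog q q - Elog mu q).
  by rewrite -mulr_sumr sumrB.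
have -> : \sum_a - (t * (mu a - q a)) = 0.
  by rewrite sumrN -mulr_sumr sumrB mu1 q1 subrr mulr0 oppr0.
have -> : \sum_a (if q a == 0 then t * mu a + nxlogx (t * mu a)
                  else - (t ^+ 2 * ((mu a - q a) ^+ 2 / q a)))
          = \sum_(a | q a == 0) (t * mu a + nxlogx (t * mu a)) - t ^+ 2 * chi2 mu q.
  rewrite (bigID (fun a => q a == 0)) /= /chi2 mulr_sumr -sumrN.
  by congr (_ + _); [apply: eq_bigr => a /= -> | apply: eq_bigr => a /= /negPf ->].
by rewrite big_split /=; lra.
Qed.

Lemma supp_sub_eq0 mu q a : supp_sub mu q -> q a = 0 -> mu a = 0.
Proof. by move=> smq qa; apply/eqP/negPn/negP => /smq; rewrite qa eqxx. Qed.

Lemma maxent_supp mu q F : is_dist mu -> maxent_belief mu F q -> supp_sub mu q.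
Proof.
move=> mu_dist qmax; have [[q_dist _] _] := qmax; have [mu0 _] := mu_dist.
move=> a mua; apply/negP => /eqP qa.
pose m := \sum_(b | q b == 0) mu b.
have m0 : 0 < m by rewrite /m (bigD1 a) ?qa //= ltr_pwDl ?sumr_ge0 // lt0r mua mu0.
have [t /andP [t0 t1]] := exists_ln_lt ((Elog q q - Elog mu q - chi2 mu q) / m).
rewrite ltr_pdivlMr // => lnt.
have r0 := line_ge0 q_dist mu_dist (ltW t0) t1.
have upper := maxent_line_le mu_dist qmax r0.
have lower := entropy_line_ge q_dist mu_dist r0.
have zeros : - (t * m * ln t) <= \sum_(b | q b == 0) (t * mu b + nxlogx (t * mu b)).
  rewrite /m mulr_sumr mulr_suml -sumrN; apply: ler_sum => b _.
  have := nxlogx_mul_ge t0 (mu0 b) (dist_le1 b mu_dist).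
  have := mulr_ge0 (ltW t0) (mu0 b); lra.
have chi : t ^+ 2 * chi2 mu q <= t * chi2 mu q.
  by rewrite expr2 ler_wpM2r ?chi2_ge0 // ger_pMr.
have : 0 < t * (Elog q q - Elog mu q - chi2 mu q - ln t * m).
  by rewrite mulr_gt0 // subr_gt0.
lra.
Qed.

Lemma line_ge0_small q mu : is_dist q -> is_dist mu -> supp_sub mu q ->
  exists2 e : R, 0 < e & forall t, `|t| <= e -> forall a, 0 <= line q mu t a.
Proof.
move=> q_dist mu_dist smq; have [q0 _] := q_dist; have [mu0 _] := mu_dist.
exists (\big[Num.min/1]_(a | q a != 0) q a).
  by apply: lt_bigmin => // a qa; rewrite lt0r qa q0.
move=> t /bigmin_geP [t1 tq] a; have [qa0 | qan0] := eqVneq (q a) 0.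
  by rewrite lineE qa0 (supp_sub_eq0 smq qa0) subrr mulr0 addr0.
have [t0 | t0] := lerP 0 t.
  by apply: line_ge0 => //; rewrite -(ger0_norm t0).
have := tq a qan0; have := dist_le1 a mu_dist; have := mu0 a.
rewrite lineE ltr0_norm //; nra.
Qed.

Lemma maxent_Elog mu q F : is_dist mu -> maxent_belief mu F q -> Elog mu q = Elog q q.
Proof.
move=> mu_dist qmax; have [[q_dist _] _] := qmax.
have smq := maxent_supp mu_dist qmax.
have [e e0 r0] := line_ge0_small q_dist mu_dist smq.
have zeros t : \sum_(a | q a == 0) (t * mu a + nxlogx (t * mu a)) = 0.
  by apply: big1 => a /eqP /(supp_sub_eq0 smq) ->; rewrite mulr0 nxlogx0 addr0.
apply/eqP; rewrite eq_sym -subr_eq0; apply/eqP.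
apply: (lin_quad_le0_eq0 e0 (chi2_ge0 mu q_dist)) => t /r0 rt0.
have := entropy_line_ge q_dist mu_dist rt0; have := maxent_line_le mu_dist qmax rt0.
rewrite zeros; lra.
Qed.

Lemma maxent_belief_Iq mu q F : is_dist mu -> maxent_belief mu F q -> Iq q mu.
Proof.
move=> mu_dist qmax; split=> //.
by split; [exact: maxent_supp qmax | exact: maxent_Elog qmax].
Qed.

Lemma entropy_lt_cross p q : is_dist p -> is_dist q -> supp_sub p q -> p != q ->
  entropy p < - Elog p q.
Proof.
move=> [p0 p1] [q0 q1] spq neq.
have /existsP [a pqa] : [exists a, p a != q a].
  rewrite -negb_forall; apply: contra neq => /forallP pq.
  by apply/eqP/ffunP => a; exact/eqP.
have : \sum_b p b * (logc (q b) - logc (p b)) < \sum_b (q b - p b).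
  rewrite (bigD1 a) // [X in _ < X](bigD1 a) //=.
  apply: ltr_leD; first exact: mul_logc_ratio_lt (p0 a) (q0 a) (spq a) pqa.
  by apply: ler_sum => b _; exact: mul_logc_ratio_le (p0 b) (q0 b) (spq b).
have -> : \sum_b p b * (logc (q b) - logc (p b)) = Elog p q - Elog p p.
  by rewrite -sumrB; apply: eq_bigr => b _; ring.
by rewrite sumrB q1 p1 subrr /entropy; lra.
Qed.

Definition zero_indicator q (a : profile Act) : R := (q a == 0)%:R.

Lemma supp_sub_indicatorP p q : (forall a, 0 <= p a) ->
  supp_sub p q <-> \sum_a p a * zero_indicator q a = 0.
Proof.
move=> p0; rewrite /zero_indicator; split=> [spq | sum0 a].
  apply: big1 => a _; have [qa | _] := eqVneq (q a) 0; last by rewrite mulr0.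
  by rewrite (supp_sub_eq0 spq qa) mul0r.
apply: contra => /eqP qa.
have := psumr_eq0P (fun b _ => mulr_ge0 (p0 b) (ler0n _ _)) sum0 (i := a) isT.
by rewrite qa eqxx mulr1 => ->.
Qed.

Definition log_moments q (f : profile Act -> R) : Prop :=
  f = (fun a => logc (q a)) \/ f = zero_indicator q.

Lemma Iq_maxent_belief q mu : is_dist q -> Iq q mu -> maxent_belief mu (log_moments q) q.
Proof.
move=> q_dist [mu_dist [smq el]]; have [q0 _] := q_dist; have [mu0 _] := mu_dist.
have mu_ind := (supp_sub_indicatorP q mu0).1 smq.
split.
  split=> // f [-> | ->]; first exact/esym.
  by rewrite mu_ind; apply/(supp_sub_indicatorP q q0).
move=> p [p_dist pF] neq.
have spq : supp_sub p q.
  by apply/(supp_sub_indicatorP q p_dist.1); rewrite pF ?mu_ind //; right.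
have Epq : Elog p q = Elog q q by rewrite -el; apply: pF; left.
by have := entropy_lt_cross p_dist q_dist spq neq; rewrite Epq.
Qed.

End MaxEntropy.

Theorem corollary1 (R : realType) (N : finType) (Act : N -> finType)
    (u : N -> profile Act -> R) (qstar : {ffun profile Act -> R}) :
  CE u qstar ->
  (forall p : {ffun profile Act -> R}, CE u p -> p = qstar) ->
  (forall mu : {ffun profile Act -> R}, Iset u mu <-> Iq qstar mu) /\
  (forall mu : {ffun profile Act -> R},
     directly_implementable u mu <->
     (is_dist mu /\ supp_sub mu qstar /\ Elog mu qstar = Elog qstar qstar)).
Proof.
move=> [qstar_dist qstar_ob] qstar_uniq; split=> mu; split.
- by move=> [q [/qstar_uniq -> ?]].
- by move=> ?; exists qstar.
- move=> [mu_dist [F [q [qmax q_ob]]]].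
  have qstarE : q = qstar by apply: qstar_uniq; split; [exact: qmax.1.1 | exact: q_ob].
  by rewrite -qstarE; exact: maxent_belief_Iq qmax.
- move=> Imu; split; first exact: Imu.1.
  exists (log_moments qstar), qstar.
  by split; [exact: Iq_maxent_belief | exact: qstar_ob].
Qed.
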